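(* Let $X$ be a metric space with an accumulation point, and let $\rho:\mathcal{F}\to[\Psi]^\omega$ be a partition regular function. Then: (i) $\rho$ is $P^+$ if and only if $\Lambda_x(\rho)=\Gamma_x(\rho)$ for every sequence $x\in X^\Psi$; (ii) $\rho$ is $P^{\,|}$ if and only if $\Lambda_x(\rho)$ is closed for every sequence $x\in X^\Psi$; (iii) if $X$ is moreover locally compact, then $\rho$ is $P^-$ if and only if, for every sequence $x\in X^\Psi$, each isolated point of $\Gamma_x(\rho)$ belongs to $\Lambda_x(\rho)$.
   Context: Let $\Omega,\Psi$ be countably infinite sets and $\mathcal{F}\subseteq[\Omega]^\omega$ a nonempty family of infinite subsets of $\Omega$ with $A\setminus K\in\mathcal{F}$ for all $A\in\mathcal{F}$ and finite $K\subseteq\Omega$. A function $\rho:\mathcal{F}\to[\Psi]^\omega$ is partition regular if: (M) $E\subseteq F$ in $\mathcal{F}$ implies $\rho(E)\subseteq\rho(F)$; (R) for every $F\in\mathcal{F}$ and $A,B\subseteq\Psi$ with $\rho(F)=A\cup B$ there is $E\in\mathcal{F}$ with $\rho(E)\subseteq A$ or $\rho(E)\subseteq B$; (S) for every $F\in\mathcal{F}$ there is $E\subseteq F$, $E\in\mathcal{F}$, such that for every $a\in\rho(E)$ there is a finite $K\subseteq\Omega$ with $a\notin\rho(E\setminus K)$. $\mathcal{I}_\rho=\{S\subseteq\Psi:\forall F\in\mathcal{F}\ \rho(F)\not\subseteq S\}$ and $\mathcal{I}_\rho^+=\mathcal{P}(\Psi)\setminus\mathcal{I}_\rho$. For $F\in\mathcal{F}$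 and $B\subseteq\Psi$ write $\rho(F)\subseteq^\rho B$ if there is a finite $K\subseteq\Omega$ with $\rho(F\setminus K)\subseteq B$. $\rho$ is $P^+$ if for every $\subseteq$-decreasing sequence $(A_n)_{n\in\omega}$ of sets in $\mathcal{I}_\rho^+$ there is $F\in\mathcal{F}$ with $\rho(F)\subseteq^\rho A_n$ for all $n$; $P^-$ if the same holds for every such sequence with additionally $A_n\setminus A_{n+1}\in\mathcal{I}_\rho$ for all $n$; $P^{\,|}$ if the same holds for every such sequence with additionally $A_n\setminus A_{n+1}\in\mathcal{I}_\rho^+$ for all $n$. For $x:\Psi\to X$: $\Gamma_x(\rho)$ is the set of $\eta\in X$ such that for every neighborhood $U$ of $\eta$ there is $F\in\mathcal{F}$ with $\rho(F)\subseteq\{s\in\Psi:x_s\in U\}$; $\Lambda_x(\rho)$ is the set of $\eta\in X$ for which there is $F\in\mathcal{F}$ such that for every neighborhood $U$ of $\eta$ there is a finite $K\subseteq\Omega$ with $x_s\in U$ for all $s\in\rho(F\setminus K)$. *)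

From HB Require Import structures.
From mathcomp Require Import all_boot all_order all_algebra.
From mathcomp Require Import all_classical all_reals topology.
Set Implicit Arguments. Unset Strict Implicit. Unset Printing Implicit Defensive.
Local Open Scope classical_set_scope.

Section PRF.
Context {Omega Psi : Type}.

Definition good_family (F : set (set Omega)) : Prop :=
  (exists A, F A) /\ (forall A, F A -> infinite_set A) /\
  (forall A K, F A -> finite_set K -> F (A `\` K)).

(* rho : F -> [Psi]^omega; only values on members of F matter *)
Definition partition_regular (F : set (set Omega)) (rho : set Omega -> set Psi) : Prop :=
  (forall E, F E -> infinite_set (rho E)) /\
  (forall E G, F E -> F G -> E `<=` G -> rho E `<=` rho G) /\
  (forall G (A B : set Psi), F G -> rho G = A `|` B ->
               exists E, F E /\ (rho E `<=` A \/ rho E `<=` B)) /\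
  (forall G, F G -> exists E, F E /\ E `<=` G /\
               forall a, rho E a -> exists K, finite_set K /\ ~ rho (E `\` K) a).

Definition I_rho (F : set (set Omega)) (rho : set Omega -> set Psi) : set (set Psi) :=
  [set S | forall E, F E -> ~ (rho E `<=` S)].

Definition I_rho_plus F rho : set (set Psi) := ~` I_rho F rho.

Definition sub_rho (rho : set Omega -> set Psi) (E : set Omega) (B : set Psi) : Prop :=
  exists K, finite_set K /\ rho (E `\` K) `<=` B.

Definition P_plus F rho : Prop :=
  forall A : nat -> set Psi, (forall n, A n.+1 `<=` A n) ->
    (forall n, I_rho_plus F rho (A n)) ->
    exists E, F E /\ forall n, sub_rho rho E (A n).

Definition P_minus F rho : Prop :=
  forall A : nat -> set Psi, (forall n, A n.+1 `<=` A n) ->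
    (forall n, I_rho_plus F rho (A n)) ->
    (forall n, I_rho F rho (A n `\` A n.+1)) ->
    exists E, F E /\ forall n, sub_rho rho E (A n).

Definition P_bar F rho : Prop :=
  forall A : nat -> set Psi, (forall n, A n.+1 `<=` A n) ->
    (forall n, I_rho_plus F rho (A n)) ->
    (forall n, I_rho_plus F rho (A n `\` A n.+1)) ->
    exists E, F E /\ forall n, sub_rho rho E (A n).

Context {X : topologicalType}.

Definition Gamma (F : set (set Omega)) (rho : set Omega -> set Psi) (x : Psi -> X) : set X :=
  [set eta | forall U, nbhs eta U -> exists E, F E /\ rho E `<=` [set s | U (x s)]].

Definition Lambda (F : set (set Omega)) (rho : set Omega -> set Psi) (x : Psi -> X) : set X :=
  [set eta | exists E, F E /\ forall U, nbhs eta U ->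
     exists K, finite_set K /\ forall s, rho (E `\` K) s -> U (x s)].

End PRF.

Definition isolated_point {X : topologicalType} (A : set X) (eta : X) : Prop :=
  A eta /\ exists U, nbhs eta U /\ U `&` A = [set eta].

(* Sufficiency: fix an injective sequence y_m -> p of points different from an
   accumulation point p of X. A decreasing sequence (A_n) of subsets of Psi defines
   x : Psi -> X sending the layer A_(m-1) \ A_m to y_m and the intersection of the A_n
   to p. Then p lies in Gamma_x when every A_n is I_rho-positive, p lies in Lambda_x only
   if the A_n have a common rho-pseudo-intersection, y_m lies in Lambda_x when its layer
   is I_rho-positive, and p is isolated in Gamma_x when all layers are in I_rho.
   Necessity: for eta in Gamma_x, in the closure of Lambda_x, or isolated in Gamma_x,
   apply P+, P| or P- to the preimages of shrinking balls around eta. For P| the radii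
   are spaced along points of Lambda_x converging to eta, so that every layer contains a
   rho-image near one of them. For P- every layer is mapped into a compact annulus
   around eta missing Gamma_x; since partition regularity makes I_rho an ideal,
   compactness puts the layer into I_rho. *)

From HB Require Import structures.
From mathcomp Require Import all_boot all_order all_algebra.
From mathcomp Require Import all_classical all_reals topology normedtype.
From mathcomp Require Import interval_inference lra.
Import Order.TTheory GRing.Theory Num.Theory.
Local Open Scope classical_set_scope.

Section partition_regular_ideal.
Context {Omega Psi : Type} {F : set (set Omega)} {rho : set Omega -> set Psi}.
Hypothesis rho_pr : partition_regular F rho.

Lemma rho_neq0 [E] : F E -> rho E !=set0.
Proof.
move=> FE; apply/set0P/negP => /eqP rhoE0.
by case: rho_pr => /(_ E FE) + _; rewrite rhoE0; apply; exact: finite_set0.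
Qed.

Lemma I_rho_plusP {A} : I_rho_plus F rho A <-> exists E, F E /\ rho E `<=` A.
Proof.
split=> [|[E [FE EA]] IA]; last exact: IA E FE EA.
by move=> nIA; apply: contrapT => nE; apply: nIA => E FE EA; apply: nE; exists E.
Qed.

Lemma I_rhoS [A B] : A `<=` B -> I_rho F rho B -> I_rho F rho A.
Proof. by move=> AB IB E FE EA; apply: (IB E FE); apply: subset_trans AB. Qed.

Lemma I_rho_plusS [A B] : A `<=` B -> I_rho_plus F rho A -> I_rho_plus F rho B.
Proof. by move=> AB; apply: contra_not; exact: I_rhoS. Qed.

Lemma I_rho0 : I_rho F rho set0.
Proof. by move=> E /rho_neq0 [s rs] /(_ s rs). Qed.

Lemma I_rhoU [A B] : I_rho F rho A -> I_rho F rho B -> I_rho F rho (A `|` B).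
Proof.
move=> IA IB G FG GAB.
have rhoGE : rho G = (rho G `&` A) `|` (rho G `&` B) by rewrite -setIUr setIidl.
case: rho_pr => _ [_ [/(_ G _ _ FG rhoGE) [E [FE [EA|EB]]] _]].
- by apply: (IA E FE); apply: subset_trans EA _; exact: subIsetr.
- by apply: (IB E FE); apply: subset_trans EB _; exact: subIsetr.
Qed.

Lemma I_rho_dual_filter : Filter [set B | I_rho F rho (~` B)].
Proof.
split=> [|A B|A B AB] /=; first by rewrite setCT; exact: I_rho0.
  by rewrite setCI; exact: I_rhoU.
by apply: I_rhoS; exact: subsetC.
Qed.

End partition_regular_ideal.

Section Gamma_Lambda.
Context {Omega Psi : Type} {F : set (set Omega)} {rho : set Omega -> set Psi}.
Hypotheses (F_good : good_family F) (rho_pr : partition_regular F rho).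
Context {X : topologicalType} {x : Psi -> X}.

Lemma Lambda_sub_Gamma : Lambda F rho x `<=` Gamma F rho x.
Proof.
move=> eta [E [FE Econv]] U /Econv [K [finK EKU]].
by exists (E `\` K); split=> //; case: F_good => _ [_]; apply.
Qed.

Lemma Lambda_fiber [E z] : F E -> rho E `<=` x @^-1` [set z] -> Lambda F rho x z.
Proof.
move=> FE Ez; exists E; split=> // U Uz; exists set0; split; first exact: finite_set0.
by move=> s; rewrite setD0 => /Ez ->; exact: nbhs_singleton.
Qed.

(* Every point of K has a neighbourhood whose preimage is in I_rho; compactness is
   used in its near-covering form, against the dual filter of the ideal I_rho. *)
Lemma I_rho_preimage_compact [K] : compact K ->
  (forall z, K z -> ~ Gamma F rho x z) -> I_rho F rho (x @^-1` K).
Proof.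
move=> cK KnG.
have KnX : [set B | I_rho F rho (~` B)] [set s | K `<=` (fun z => z != x s)].
  apply: ((compact_near_coveringP K).1 cK _ _ _ (I_rho_dual_filter rho_pr)).
  move=> z /KnG /existsNP [U /not_implyP [Uz nE]].
  exists (U, ~` (x @^-1` U)) => /=.
    by split=> //; rewrite /nbhs /= setCK => E FE EU; apply: nE; exists E.
  by move=> [z' s] [/= Uz' nUs]; apply/eqP => zs; apply: nUs; rewrite -zs.
by apply: I_rhoS KnX => s Ks /(_ _ Ks); rewrite eqxx.
Qed.

End Gamma_Lambda.

Definition first_miss {T : Type} (A : nat -> set T) (m : nat) : set T :=
  [set s | ~ A m s /\ forall k, (k < m)%N -> A k s].

Section first_miss.
Context {T : Type} {A : nat -> set T}.

Lemma first_miss_uniq [m n s] : first_miss A m s -> first_miss A n s -> m = n.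
Proof.
move=> [nAm Am] [nAn An].
by case: (ltngtP m n) => // [mn|nm]; [case: nAm; exact: An | case: nAn; exact: Am].
Qed.

Lemma first_miss_exists [n s] : ~ A n s -> exists2 m, (m <= n)%N & first_miss A m s.
Proof.
move=> nAn; have exP : exists m, `[< ~ A m s >] by exists n; exact/asboolP.
case: (ex_minnP exP) => m /asboolP nAm m_min; exists m; first exact/m_min/asboolP.
split=> // k km; apply: contrapT => nAk.
by have := m_min k (asboolT nAk); rewrite leqNgt km.
Qed.

Hypothesis A_decr : forall n, A n.+1 `<=` A n.

Lemma decr_subset [m n] : (m <= n)%N -> A n `<=` A m.
Proof.
apply: (homo_leq (r := fun B C => C `<=` B)) => [B|B C D CB DC|k].
- exact: subset_refl.
- exact: subset_trans DC CB.
- exact: A_decr.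
Qed.

Lemma first_miss_gt [n m s] : A n s -> first_miss A m s -> (n < m)%N.
Proof.
move=> An [nAm _]; rewrite ltnNge; apply/negP => mn; apply: nAm.
exact: decr_subset mn _ An.
Qed.

Lemma first_missS m : first_miss A m.+1 = A m `\` A m.+1.
Proof.
apply/seteqP; split=> [s [nAm1 Am]|s [Am nAm1]]; first by split=> //; exact: Am.
split=> // k; rewrite ltnS => km.
exact: decr_subset km _ Am.
Qed.

End first_miss.

Section level_seq.
Context {Psi : Type} {X : Type} (A : nat -> set Psi) (y : nat -> X) (p : X).

(* The paper's test sequence: [y m] on the layer [first_miss A m] and [p] on the
   intersection of all [A n]. *)
Definition level_seq (s : Psi) : X :=
  if pselect (exists m, first_miss A m s) is left _
  then y (xget 0%N (first_miss A ^~ s)) else p.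

Lemma level_seq_first_miss [m s] : first_miss A m s -> level_seq s = y m.
Proof.
move=> ms; rewrite /level_seq; case: pselect => [ex|[]]; last by exists m.
by congr y; apply: first_miss_uniq (xgetPex 0%N ex) ms.
Qed.

Lemma level_seq_cases s :
  (forall n, A n s) /\ level_seq s = p \/
  exists m, first_miss A m s /\ level_seq s = y m.
Proof.
have [[n nAn]|] := pselect (exists n, ~ A n s).
  have [m _ ms] := first_miss_exists nAn.
  by right; exists m; split=> //; exact: level_seq_first_miss.
move=> /forallNP nA; have An n : A n s by apply: contrapT; exact: nA.
left; split=> //; rewrite /level_seq; case: pselect => // [[m [nAm _]]].
by case: nAm.
Qed.

End level_seq.

Section hausdorff.
Context {T : topologicalType} (hT : hausdorff_space T).

Lemma nbhs_setC_finite [S : set T] [z] : finite_set S -> ~ S z -> nbhs z (~` S).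
Proof.
move=> finS nSz; apply: open_nbhs_nbhs; split=> //; rewrite openC.
exact: (accessible_finite_set_closed.1 (hausdorff_accessible hT)).
Qed.

Lemma cvg_nbhs_isolating [y : nat -> T] [p z : T] : y @ \oo --> p -> z != p ->
  exists2 V, nbhs z V & ~ V p /\ forall m, V (y m) -> y m = z.
Proof.
move=> y_cvg zp.
have [V [W [Vz Wp VW]]] : exists V W,
    [/\ nbhs z V, nbhs p W & forall t, V t -> ~ W t].
  apply: contrapT => nsep; move/eqP: zp; apply; apply: hT => V W Vz Wp.
  apply: contrapT => VW0; apply: nsep; exists V, W; split=> // t Vt Wt.
  by apply: VW0; exists t.
have [N _ yW] := y_cvg W Wp.
exists (V `&` ~` [set y k | k in [set k | (k < N)%N /\ y k != z]]).
  apply: filterI Vz _; apply: nbhs_setC_finite.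
    by apply: finite_image; apply: sub_finite_set (finite_II N) => k [].
  by move=> [k [_ /eqP ykz]].
split=> [[Vp _]|m [Vym nS]]; first exact: VW Vp (nbhs_singleton Wp).
have [Nm|mN] := leqP N m; first by case: (VW _ Vym (yW m Nm)).
by apply: contrapT => ymz; apply: nS; exists m => //; split=> //; exact/eqP.
Qed.

End hausdorff.

Section level_seq_test.
Context {Omega Psi : Type} {F : set (set Omega)} {rho : set Omega -> set Psi}.
Hypothesis rho_pr : partition_regular F rho.
Context {X : topologicalType} (hX : hausdorff_space X) {p : X} {y : nat -> X}.
Hypotheses (y_cvg : y @ \oo --> p) (y_inj : injective y) (y_neq : forall m, y m != p).
Context {A : nat -> set Psi} (A_decr : forall n, A n.+1 `<=` A n).
Local Notation x := (level_seq A y p).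

Lemma Gamma_level_seq_p : (forall n, I_rho_plus F rho (A n)) -> Gamma F rho x p.
Proof.
move=> A_plus U Up; have [N _ yU] := y_cvg U Up.
have [E [FE EA]] := I_rho_plusP.1 (A_plus N).
exists E; split=> // s /EA ANs /=.
have [[_ ->]|[m [ms ->]]] := level_seq_cases A y p s; first exact: nbhs_singleton.
exact/yU/ltnW/(first_miss_gt A_decr ANs ms).
Qed.

Lemma Lambda_level_seq_p : Lambda F rho x p ->
  exists E, F E /\ forall n, sub_rho rho E (A n).
Proof.
move=> [E [FE Ep]]; exists E; split=> // n.
have [|K [finK EK]] := Ep (~` [set y k | k in `I_n.+1]).
  apply: nbhs_setC_finite => //; first exact/finite_image/finite_II.
  by move=> [k _ /eqP]; apply/negP.
exists K; split=> // s /EK + ; apply: contra_notP => nAns.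
have [m mn ms] := first_miss_exists nAns.
by rewrite /= (level_seq_first_miss A y p ms); exists m.
Qed.

Lemma Lambda_level_seq_y m : I_rho_plus F rho (first_miss A m) -> Lambda F rho x (y m).
Proof.
move=> /I_rho_plusP [E [FE Em]]; apply: (Lambda_fiber FE) => s /Em ms.
exact: level_seq_first_miss.
Qed.

Lemma Gamma_level_seq_neq [z] : z != p -> Gamma F rho x z ->
  exists m, z = y m /\ I_rho_plus F rho (first_miss A m).
Proof.
move=> zp Gz; have [V Vz [nVp Vy]] := cvg_nbhs_isolating hX y_cvg zp.
have [E [FE EV]] := Gz V Vz.
have Ez s : rho E s -> exists2 m, first_miss A m s & y m = z.
  move=> /EV /=; have [[_ ->] //|[m [ms ->]] /Vy] := level_seq_cases A y p s.
  by exists m.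
have [s0 /Ez [m0 m0s0 ym0]] := rho_neq0 rho_pr FE.
exists m0; split=> //; apply/I_rho_plusP; exists E; split=> // s /Ez [m ms ym].
by have <- : m = m0 by apply: y_inj; rewrite ym ym0.
Qed.

Lemma isolated_Gamma_level_seq_p : (forall n, I_rho_plus F rho (A n)) ->
  (forall n, I_rho F rho (A n `\` A n.+1)) -> isolated_point (Gamma F rho x) p.
Proof.
move=> A_plus layer_I; split; first exact: Gamma_level_seq_p.
have py0 : p <> y 0%N by apply/eqP; rewrite eq_sym.
exists (~` [set y 0%N]); split; first exact: nbhs_setC_finite (finite_set1 _) _.
apply/seteqP; split=> [z [zy0 Gz]|z ->] /=; last by split=> //; exact: Gamma_level_seq_p.
have [//|zp] := eqVneq z p; have [[|m] [zm]] := Gamma_level_seq_neq zp Gz => //.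
by rewrite first_missS // => /(_ (layer_I m)).
Qed.

End level_seq_test.

Section natSinv.
Local Open Scope ring_scope.

Lemma natSinv_lt {R : archiRealFieldType} (e : R) : 0 < e -> exists n, n.+1%:R^-1 < e.
Proof.
by move=> e_gt0; have [N _ /(_ N (leqnn N))] := near_infty_natSinv_lt (PosNum e_gt0); exists N.
Qed.

Lemma natSinv_decr {R : numFieldType} n : n.+2%:R^-1 <= n.+1%:R^-1 :> R.
Proof. by rewrite lef_pV2 ?posrE // ler_nat. Qed.

End natSinv.

Section metric.
Local Open Scope ring_scope.
Context {R : realType} {X : pseudoMetricType R} (hX : hausdorff_space X).

Lemma ball_separation [a b : X] : a != b -> exists2 e : R, 0 < e & ~ ball a e b.
Proof.
move=> /eqP ab; apply: contrapT => nsep; apply: ab; apply: hX.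
move=> U V /nbhs_ballP [e e_gt0 aU] /nbhs_ballP [e' e'_gt0 bV].
exists b; split; last exact/bV/ballxx.
by apply: aU; apply: contrapT => nab; apply: nsep; exists e.
Qed.

(* The factor 4 leaves room for the triangle inequalities in [P_bar_closed_Lambda]. *)
Lemma limit_point_separated_seq [S : set X] [p] : limit_point S p ->
  exists (y : nat -> X) (r : nat -> R), forall m,
  [/\ 0 < r m, r m.+1 <= r m, r m <= m.+1%:R^-1, S (y m) &
      ball p (r m) (y m) /\ ~ ball p (4 * r m.+1) (y m)].
Proof.
move=> p_lim.
have /choice [f f_spec] : forall e : R,
    exists z, 0 < e -> [/\ S z, z != p & ball p e z].
  move=> e; have [e_gt0|e_le0] := pselect (0 < e); last by exists p => /e_le0.
  by have [z [zp Sz pz]] := p_lim _ (nbhsx_ballx p e e_gt0); exists z.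
have /choice [sep sep_spec] : forall z : X,
    exists e : R, z != p -> 0 < e /\ ~ ball p e z.
  move=> z; have [->|zp] := eqVneq z p; first by exists 0.
  have pz : p != z by rewrite eq_sym.
  by have [e e_gt0 npz] := ball_separation pz; exists e.
pose r := fix r (m : nat) : R := if m is m'.+1
  then Num.min m.+1%:R^-1 (Num.min (r m') (sep (f (r m')) / 4)) else 1.
have r_gt0 m : 0 < r m.
  elim: m => [|m IH] /=; first exact: ltr01.
  have [_ fp _] := f_spec _ IH; have [sep_gt0 _] := sep_spec _ fp.
  by rewrite !lt_min invr_gt0 ltr0Sn IH divr_gt0.
exists (fun m => f (r m)), r => m.
have [Sy yp py] := f_spec _ (r_gt0 m); have [sep_gt0 npy] := sep_spec _ yp.
have r_decr : r m.+1 <= r m by rewrite /= !ge_min lexx orbT.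
have r_inv : r m <= m.+1%:R^-1.
  by case: m {Sy yp py sep_gt0 npy r_decr} => [|m] /=; rewrite ?invr1 // ge_min lexx.
have r_sep : r m.+1 <= sep (f (r m)) / 4 by rewrite /= !ge_min lexx !orbT.
by split=> //; split=> // py4; apply/npy/(le_ball _ py4); lra.
Qed.

Lemma limit_point_injective_cvg [S : set X] [p] : limit_point S p ->
  exists y : nat -> X,
    [/\ forall m, S (y m), y @ \oo --> p, injective y & forall m, y m != p].
Proof.
move=> /limit_point_separated_seq [y [r yr]]; exists y.
have r_decr i j : (i <= j)%N -> r j <= r i.
  apply: (homo_leq (r := fun a b => b <= a)) => [a|a b c ba cb|k].
  - exact: lexx.
  - exact: le_trans cb ba.
  - by have [] := yr k.
have y_neq_lt i j : (i < j)%N -> y i != y j.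
  move=> ij; apply/eqP => yij.
  have [_ _ _ _ [_ npyi]] := yr i; have [ri1_gt0 _ _ _ _] := yr i.+1.
  have [_ _ _ _ [pyj _]] := yr j; have := r_decr _ _ ij.
  by move=> rji; apply/npyi; rewrite yij; apply: le_ball pyj; lra.
split=> [m|||m]; first by have [] := yr m.
- apply/cvg_ballP => e e_gt0.
  apply: filterS (near_infty_natSinv_lt (PosNum e_gt0)) => m inv_lt.
  have [_ _ r_inv _ [pym _]] := yr m; apply: le_ball pym.
  exact/ltW/(le_lt_trans r_inv inv_lt).
- move=> i j yij; case: (ltngtP i j) => // ij;
    by have := y_neq_lt _ _ ij; rewrite yij eqxx.
- have [_ _ _ _ [_ npy]] := yr m; have [r_gt0 _ _ _ _] := yr m.+1.
  by apply/eqP => ymp; apply: npy; rewrite ymp; apply: ballxx; lra.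
Qed.

End metric.

Section metric_Gamma_Lambda.
Local Open Scope ring_scope.
Context {Omega Psi : Type} {F : set (set Omega)} {rho : set Omega -> set Psi}.
Hypotheses (F_good : good_family F) (rho_pr : partition_regular F rho).
Context {R : realType} {X : pseudoMetricType R} (hX : hausdorff_space X).
Context (x : Psi -> X).

Lemma Gamma_ball_plus [eta e] : Gamma F rho x eta -> 0 < e ->
  I_rho_plus F rho (x @^-1` ball eta e).
Proof. by move=> Geta e_gt0; apply/I_rho_plusP; exact/Geta/nbhsx_ballx. Qed.

Lemma Lambda_shrinking_balls [eta] [r : nat -> R] [E] : F E ->
  (forall e, 0 < e -> exists n, r n < e) ->
  (forall n, sub_rho rho E (x @^-1` ball eta (r n))) -> Lambda F rho x eta.
Proof.
move=> FE r_small Er; exists E; split=> // U /nbhs_ballP [e e_gt0 etaU].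
have [n rn] := r_small e e_gt0; have [K [finK EK]] := Er n.
by exists K; split=> // s /EK Us; apply: etaU; apply: le_ball Us; exact: ltW.
Qed.

Lemma P_plus_Lambda_eq_Gamma : P_plus F rho -> Lambda F rho x = Gamma F rho x.
Proof.
move=> Pp; apply/seteqP; split; first exact: Lambda_sub_Gamma.
move=> eta Geta; pose A n := x @^-1` ball eta n.+1%:R^-1.
have A_decr n : A n.+1 `<=` A n by move=> s; apply: le_ball; exact: natSinv_decr.
have A_plus n : I_rho_plus F rho (A n).
  by apply: Gamma_ball_plus Geta _; rewrite invr_gt0.
have [E [FE EA]] := Pp A A_decr A_plus.
by apply: (Lambda_shrinking_balls FE _ EA); exact: natSinv_lt.
Qed.

Lemma P_bar_closed_Lambda : P_bar F rho -> closed (Lambda F rho x).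
Proof.
move=> Pb eta eta_cl; have [//|nLeta] := pselect (Lambda F rho x eta).
have eta_lim : limit_point (Lambda F rho x) eta.
  move=> U /eta_cl [z [Lz Uz]]; exists z; split=> //.
  by apply/eqP => zeta; apply: nLeta; rewrite -zeta.
have [z [r zr]] := limit_point_separated_seq hX eta_lim.
pose A n := x @^-1` ball eta (2 * r n).
have A_decr n : A n.+1 `<=` A n.
  by move=> s; apply: le_ball; have [_ r_decr _ _ _] := zr n; lra.
have layer_plus n : I_rho_plus F rho (A n `\` A n.+1).
  have [_ r_decr _ Lz [etaz netaz]] := zr n; have [r1_gt0 _ _ _ _] := zr n.+1.
  have [E [FE Ez]] := I_rho_plusP.1 (Gamma_ball_plus (Lambda_sub_Gamma F_good _ Lz) r1_gt0).
  apply/I_rho_plusP; exists E; split=> // s /Ez zs; split.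
  - by apply: (le_ball (e1 := r n + r n.+1)); [lra | exact: ball_triangle etaz zs].
  - move=> etas; apply: netaz; apply: (le_ball (e1 := 2 * r n.+1 + r n.+1)); first lra.
    exact: ball_triangle etas (ball_sym zs).
have A_plus n : I_rho_plus F rho (A n) by apply: I_rho_plusS (layer_plus n).
have [E [FE EA]] := Pb A A_decr A_plus layer_plus.
exfalso; apply/nLeta/(Lambda_shrinking_balls FE _ EA) => e e_gt0.
have [|n ne] := natSinv_lt (e / 2); first lra.
exists n; have [_ _ r_inv _ _] := zr n; have := le_lt_trans r_inv ne; rewrite /=; lra.
Qed.

Lemma P_minus_isolated_Gamma_Lambda eta : locally_compact [set: X] -> P_minus F rho ->
  isolated_point (Gamma F rho x) eta -> Lambda F rho x eta.
Proof.
move=> X_lc Pm [Geta [U [Ueta UG]]].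
have [C + [C_compact _]] := X_lc eta I; rewrite withinET => Ceta.
have [r0 r0_gt0 r0_sub] := (nbhs_ballP _ _).1 (filterI Ueta Ceta).
have {}r0_gt0 : 0 < r0 :> R := r0_gt0.
pose r n := Num.min (r0 / 2) n.+1%:R^-1.
have r_gt0 n : 0 < r n by rewrite lt_min invr_gt0 ltr0Sn andbT; lra.
have r_half n : r n <= r0 / 2 by rewrite ge_min lexx.
pose A n := x @^-1` ball eta (r n).
have A_decr n : A n.+1 `<=` A n.
  by move=> s; apply: le_ball; rewrite le_min !ge_min lexx natSinv_decr orbT.
have layer_I n : I_rho F rho (A n `\` A n.+1).
  pose K := C `&` closed_ball eta (r0 / 2) `&` ~` (ball eta (r n.+1))°.
  apply: (I_rhoS (B := x @^-1` K)) => [s [etas netas]|].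
    have etas0 : ball eta r0 (x s) by apply: le_ball etas; have := r_half n; lra.
    split; [split|]; first exact: (r0_sub _ etas0).2.
    - by apply: subset_closed_ball; apply: le_ball etas.
    - by move/interior_subset.
  apply: (I_rho_preimage_compact rho_pr).
    apply: compact_closedI; last exact/open_closedC/open_interior.
    by apply: compact_closedI => //; exact: closed_ball_closed.
  move=> z [[_ /(subset_closure_half r0_gt0)/r0_sub [Uz _]] nz] Gz.
  have : (U `&` Gamma F rho x) z by [].
  by rewrite UG => /= zeta; apply: nz; rewrite zeta; exact: nbhsx_ballx.
have A_plus n : I_rho_plus F rho (A n) by exact: Gamma_ball_plus Geta (r_gt0 n).
have [E [FE EA]] := Pm A A_decr A_plus layer_I.
apply: (Lambda_shrinking_balls FE _ EA) => e /natSinv_lt [n ne].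
by exists n; apply: le_lt_trans ne; rewrite ge_min lexx orbT.
Qed.

End metric_Gamma_Lambda.

Theorem proposition3p2 (Omega Psi : Type)
  (hOc : countable [set: Omega]) (hOi : infinite_set [set: Omega])
  (hPc : countable [set: Psi]) (hPi : infinite_set [set: Psi])
  (F : set (set Omega)) (hF : good_family F)
  (rho : set Omega -> set Psi) (hrho : partition_regular F rho)
  (R : realType) (X : pseudoMetricType R) (hX : hausdorff_space X)
  (hacc : exists p : X, limit_point [set: X] p) :
  (P_plus F rho <-> forall x : Psi -> X, Lambda F rho x = Gamma F rho x) /\
  (P_bar F rho <-> forall x : Psi -> X, closed (Lambda F rho x)) /\
  (locally_compact [set: X] ->
     (P_minus F rho <-> forall x : Psi -> X, forall eta : X,
        isolated_point (Gamma F rho x) eta -> Lambda F rho x eta)).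
Proof.
have [p /(limit_point_injective_cvg hX) [y [_ y_cvg y_inj y_neq]]] := hacc.
split; [split | split; [split | move=> X_lc; split]].
- by move=> Pp x; apply: (P_plus_Lambda_eq_Gamma hF).
- move=> LG A A_decr A_plus; apply: (Lambda_level_seq_p hX y_neq); rewrite LG.
  by apply: Gamma_level_seq_p.
- by move=> Pb x; apply: (P_bar_closed_Lambda hF hX).
- move=> Lcl A A_decr A_plus layer_plus; apply: (Lambda_level_seq_p hX y_neq).
  apply: (closed_cvg _ (Lcl _) _ _ y_cvg); exists 1%N => // [[|n]] // _.
  by apply: Lambda_level_seq_y; rewrite first_missS.
- by move=> Pm x eta; apply: (P_minus_isolated_Gamma_Lambda hrho).
- move=> iso A A_decr A_plus layer_I; apply: (Lambda_level_seq_p hX y_neq); apply: iso.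
  by apply: (isolated_Gamma_level_seq_p hrho hX).
Qed.
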